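(* Let $\Omega$ be a singular verification operator for $|\Psi\rangle$ (i.e. its smallest eigenvalue is $0$) with second largest eigenvalue $\beta$, let $N\ge1$ be an integer, $\delta^*=\frac{1+N\beta}{N+1}$, and $1/(N+1)\le\delta\le\delta^*$. Then $$F(N,\delta,\Omega)\le1-\frac{1}{(N+1)\delta}.$$
   Context: Let $\mathcal H$ be a Hilbert space of finite dimension $D\ge2$ and $|\Psi\rangle\in\mathcal H$ a unit vector. A verification operator for $|\Psi\rangle$ is a Hermitian operator $\Omega$ on $\mathcal H$ with $0\le\Omega\le1$, $\Omega|\Psi\rangle=|\Psi\rangle$, whose eigenvalue $1$ is nondegenerate. For a density operator $\rho$ on $\mathcal H^{\otimes(N+1)}$ put $p_\rho=\mathrm{tr}[(\Omega^{\otimes N}\otimes1)\rho]$, $f_\rho=\mathrm{tr}[(\Omega^{\otimes N}\otimes|\Psi\rangle\langle\Psi|)\rho]$, and $F(N,\delta,\Omega)=\min\{f_\rho/p_\rho:p_\rho\ge\delta\}$, the minimum over permutation-invariant density operators on $\mathcal H^{\otimes(N+1)}$. *)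

From HB Require Import structures.
From mathcomp Require Import all_boot all_order all_algebra.
From mathcomp Require Import perm complex.
From mathcomp Require Import boolp classical_sets reals.

Set Implicit Arguments.
Unset Strict Implicit.
Unset Printing Implicit Defensive.

Import Order.TTheory GRing.Theory Num.Theory.
Local Open Scope ring_scope.

(* Scalars: complex numbers R[i] over an arbitrary real number field R : realType.
   The Hilbert space H = C^D; vectors are column vectors 'cV_D, operators 'M_D. *)

Section QDefs.
Variable R : realType.
Local Notation C := (R[i]).

Definition RtoC (x : R) : C := (x%:C)%C.

Definition adj m n (A : 'M[C]_(m, n)) : 'M[C]_(n, m) := (map_mx Num.conj A)^T.

Definition hermitian n (A : 'M[C]_n) : Prop := adj A = A.

Definition psd n (A : 'M[C]_n) : Prop :=
  hermitian A /\ forall v : 'cV[C]_n, 0 <= (adj v *m A *m v) 0 0.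

Definition loewner_le n (A B : 'M[C]_n) : Prop := psd (B - A).

Definition density n (rho : 'M[C]_n) : Prop := psd rho /\ \tr rho = 1.

Definition verification_operator D (Om : 'M[C]_D) (psi : 'cV[C]_D) : Prop :=
  [/\ hermitian Om, loewner_le 0 Om, loewner_le Om 1,
      Om *m psi = psi &
      \rank (eigenspace Om 1) = 1%N].

Definition unit_vector D (psi : 'cV[C]_D) : Prop := (adj psi *m psi) 0 0 = 1.

(* Basis of H^{(x) n}: functions 'I_n -> 'I_D (the k-th tensor factor in basis
   state x k).  Operators on H^{(x) n} are matrices indexed by this finite
   type, through its enumeration. *)
Definition tidx D n := {ffun 'I_n -> 'I_D}.
Definition tdim D n := #|tidx D n|.

Definition tprod D n (A : 'I_n -> 'M[C]_D) : 'M[C]_(tdim D n) :=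
  \matrix_(i, j) \prod_(k < n)
     A k ((enum_val i : tidx D n) k) ((enum_val j : tidx D n) k).

Definition tperm_op D n (s : 'S_n) : 'M[C]_(tdim D n) :=
  \matrix_(i, j)
     ((enum_val i : tidx D n) == [ffun k => (enum_val j : tidx D n) (s k)])%:R.

Definition perm_invariant D n (rho : 'M[C]_(tdim D n)) : Prop :=
  forall s : 'S_n, tperm_op D s *m rho *m adj (tperm_op D s) = rho.

Definition OmN_tens D N (Om B : 'M[C]_D) : 'M[C]_(tdim D N.+1) :=
  tprod (fun k : 'I_(N.+1) => if (k < N)%N then Om else B).

Definition p_rho D N (Om : 'M[C]_D) (rho : 'M[C]_(tdim D N.+1)) : C :=
  \tr (OmN_tens N Om 1 *m rho).

Definition f_rho D N (Om : 'M[C]_D) (psi : 'cV[C]_D) (rho : 'M[C]_(tdim D N.+1)) : C :=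
  \tr (OmN_tens N Om (psi *m adj psi) *m rho).

(* F(N, delta, Omega): the minimum (= infimum; the feasible set is compact)
   of f_rho / p_rho over permutation-invariant density operators rho on
   H^{(x)(N+1)} with p_rho >= delta. *)
Arguments p_rho {D} N Om rho.
Arguments f_rho {D} N Om psi rho.

Definition Fval D N (delta : R) (Om : 'M[C]_D) (psi : 'cV[C]_D) : R :=
  inf [set x : R | exists rho : 'M[C]_(tdim D N.+1),
        [/\ density rho, perm_invariant rho,
            RtoC delta <= p_rho N Om rho &
            RtoC x = f_rho N Om psi rho / p_rho N Om rho]].

End QDefs.

Arguments Fval {R D} N delta Om psi.

From Pilot Require Import Defs.
From HB Require Import structures.
From mathcomp Require Import all_boot all_order all_algebra.
From mathcomp Require Import complex.
From mathcomp Require Import boolp classical_sets reals.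
From mathcomp Require Import perm ring.
Import Order.TTheory GRing.Theory Num.Theory.
Local Open Scope ring_scope.

(** Let φ₀ and φ₁ be eigenvectors of Ω for the eigenvalues 0 and β; both are
    orthogonal to ψ. For an eigenvector φ of eigenvalue a, the symmetrization
    σ_φ of |φ⟩⟨φ| ⊗ |ψ⟩⟨ψ|^{⊗N} is a permutation-invariant state with
    p = (1 + N a)/(N+1) and f = N a/(N+1), so that p - f = 1/(N+1). A convex
    combination of σ_{φ₀} and σ_{φ₁} therefore reaches p = δ for every
    δ ∈ [1/(N+1), δ*], with f/p = 1 - 1/((N+1)δ). *)

Set Implicit Arguments.
Unset Strict Implicit.
Unset Printing Implicit Defensive.

(* [inf] of a set with no lower bound is [0], hence the nonnegativity. *)
Lemma inf_le_nonneg_mem (R : realType) (S : set R) x : S x -> 0 <= x -> inf S <= x.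
Proof.
move=> Sx x_ge0; have [lbS|] := pselect (has_lbound S); first exact: ge_inf.
by move=> nlbS; rewrite inf_out // => -[].
Qed.

Lemma convex_interpolation (F : numFieldType) (p0 p1 d : F) :
  p0 <= d -> d <= p1 -> exists2 lam, 0 <= lam <= 1 & (1 - lam) * p0 + lam * p1 = d.
Proof.
move=> p0d dp1; have [p01|p01] := eqVneq p0 p1.
  exists 0; first by rewrite lexx ler01.
  by rewrite subr0 mul1r mul0r addr0; apply/le_anti; rewrite p0d p01.
have p0p1 : 0 < p1 - p0 by rewrite subr_gt0 lt_def eq_sym p01 (le_trans p0d).
exists ((d - p0) / (p1 - p0)).
  apply/andP; split; first by apply: divr_ge0; [rewrite subr_ge0 | exact: ltW].
  by rewrite ler_pdivrMr // mul1r lerD2r.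
by field; rewrite subr_eq0 eq_sym.
Qed.

Lemma mxtrace_mul_lincomb (F : comNzRingType) n a b (M X Y : 'M[F]_n) :
  \tr (M *m (a *: X + b *: Y)) = a * \tr (M *m X) + b * \tr (M *m Y).
Proof. by rewrite mulmxDr -!scalemxAr mxtraceD !mxtraceZ. Qed.

Section Adjoint.
Variable R : realType.
Local Notation C := (R[i]).

Lemma adjE m n (A : 'M[C]_(m, n)) i j : adj A i j = (A j i)^*.
Proof. by rewrite !mxE. Qed.

Lemma adj0 m n : adj (0 : 'M[C]_(m, n)) = 0.
Proof. by apply/matrixP => i j; rewrite !mxE conjC0. Qed.

Lemma adjD m n (A B : 'M[C]_(m, n)) : adj (A + B) = adj A + adj B.
Proof. by apply/matrixP => i j; rewrite !mxE rmorphD. Qed.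

Lemma adjZ m n c (A : 'M[C]_(m, n)) : adj (c *: A) = c^* *: adj A.
Proof. by apply/matrixP => i j; rewrite !mxE rmorphM. Qed.

Lemma adjM m n p (A : 'M[C]_(m, n)) (B : 'M[C]_(n, p)) :
  adj (A *m B) = adj B *m adj A.
Proof. by rewrite /adj map_mxM trmx_mul. Qed.

Lemma adjK m n (A : 'M[C]_(m, n)) : adj (adj A) = A.
Proof. by apply/matrixP => i j; rewrite !adjE conjCK. Qed.

Lemma psd0 n : psd (0 : 'M[C]_n).
Proof. by split; [rewrite /Defs.hermitian adj0 | move=> v; rewrite mulmx0 mul0mx mxE]. Qed.

Lemma psdD n (A B : 'M[C]_n) : psd A -> psd B -> psd (A + B).
Proof.
move=> [hA qA] [hB qB]; split; first by rewrite /Defs.hermitian adjD hA hB.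
by move=> v; rewrite mulmxDr mulmxDl mxE addr_ge0.
Qed.

Lemma psdZ n c (A : 'M[C]_n) : 0 <= c -> psd A -> psd (c *: A).
Proof.
move=> c_ge0 [hA qA]; split; last first.
  by move=> v; rewrite -scalemxAr -scalemxAl mxE mulr_ge0.
by rewrite /Defs.hermitian adjZ hA (CrealP (ger0_real c_ge0)).
Qed.

Lemma psd_sum n I (r : seq I) (F : I -> 'M[C]_n) :
  (forall i, psd (F i)) -> psd (\sum_(i <- r) F i).
Proof.
move=> psdF; elim: r => [|x r IH]; first by rewrite big_nil; exact: psd0.
by rewrite big_cons; exact: psdD.
Qed.

Lemma psd_mul_adj n (w : 'cV[C]_n) : psd (w *m adj w).
Proof.
split; first by rewrite /Defs.hermitian adjM adjK.
move=> v; rewrite !mulmxA -mulmxA.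
have -> : adj w *m v = adj (adj v *m w) by rewrite adjM adjK.
rewrite [X in (_ *m X) 0 0]mx11_scalar (mx11_scalar (adj v *m w)) adjE.
by rewrite -scalar_mxM mxE mulr1n !mxE eqxx mulr1n mul_conjC_ge0.
Qed.

Lemma density_convex n lam (rho sigma : 'M[C]_n) : 0 <= lam <= 1 ->
  density rho -> density sigma -> density ((1 - lam) *: rho + lam *: sigma).
Proof.
move=> /andP[lam_ge0 lam_le1] [psd_rho tr_rho] [psd_sigma tr_sigma].
split; first by apply: psdD; apply: psdZ; rewrite ?subr_ge0.
by rewrite mxtraceD !mxtraceZ tr_rho tr_sigma !mulr1 subrK.
Qed.

Definition qform n (M : 'M[C]_n) (u : 'cV[C]_n) : C := (adj u *m M *m u) 0 0.

Lemma mxtrace_mul_adj n (M : 'M[C]_n) (u : 'cV[C]_n) :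
  \tr (M *m (u *m adj u)) = qform M u.
Proof. by rewrite mulmxA mxtrace_mulC trace_mx11 /qform mulmxA. Qed.

Lemma qform1_gt0 n (u : 'cV[C]_n) : u != 0 -> 0 < qform 1 u.
Proof.
move=> u_neq0; rewrite /qform mulmx1 mxE.
have ge0 (i : 'I_n) : true -> 0 <= adj u 0 i * u i 0.
  by rewrite adjE mulrC mul_conjC_ge0.
rewrite lt_def sumr_ge0 // andbT; apply: contra u_neq0 => /eqP sum0.
apply/eqP/matrixP => i j; rewrite ord1 mxE.
by have /eqP := psumr_eq0P ge0 sum0 (i := i) isT; rewrite adjE mulrC mul_conjC_eq0 => /eqP.
Qed.

Lemma hermitian_eigenvector n (A : 'M[C]_n) (a : C) : adj A = A -> eigenvalue A a ->
  exists2 u : 'cV[C]_n, u != 0 & A *m u = a^* *: u.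
Proof.
move=> hA /eigenvalueP[v vA v_neq0]; exists (adj v).
  by apply: contra v_neq0 => /eqP v0; rewrite -(adjK v) v0 adj0.
by rewrite -{1}hA -adjM vA adjZ.
Qed.

Lemma eigenvector_orthogonal n (A : 'M[C]_n) (u v : 'cV[C]_n) (a b : C) :
  adj A = A -> A *m u = a *: u -> A *m v = b *: v -> a^* != b -> adj u *m v = 0.
Proof.
move=> hA Au Av ab.
have uA : adj u *m A = a^* *: adj u by rewrite -{1}hA -adjM Au adjZ.
have : (a^* - b) *: (adj u *m v) = 0.
  by rewrite scalerBl scalemxAl -uA -mulmxA Av -scalemxAr subrr.
by move/eqP; rewrite scalemx_eq0 subr_eq0 (negbTE ab) => /eqP.
Qed.

End Adjoint.

Section TensorProduct.
Variables (R : realType) (D n : nat).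
Local Notation C := (R[i]).

Lemma sum_tidx (F : tidx D n -> C) :
  \sum_(i < tdim D n) F (enum_val i) = \sum_(x : tidx D n) F x.
Proof. by rewrite (reindex (@enum_val (tidx D n) predT)) //; exact/onW_bij/enum_val_bij. Qed.

Lemma mul_tprod (A B : 'I_n -> 'M[C]_D) :
  tprod A *m tprod B = tprod (fun k => A k *m B k).
Proof.
apply/matrixP => i j; rewrite !mxE.
under eq_bigr do rewrite !mxE -big_split /=.
rewrite (sum_tidx (fun x => \prod_k (A k (enum_val i k) (x k) * B k (x k) (enum_val j k)))).
under [RHS]eq_bigr do rewrite mxE.
by rewrite bigA_distr_bigA.
Qed.

Lemma mxtrace_tprod (A : 'I_n -> 'M[C]_D) : \tr (tprod A) = \prod_k \tr (A k).
Proof.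
rewrite /mxtrace (eq_bigr (fun i => \prod_k A k ((enum_val i : tidx D n) k) (enum_val i k))).
  by rewrite (sum_tidx (fun x => \prod_k A k (x k) (x k))) bigA_distr_bigA.
by move=> i _; rewrite mxE.
Qed.

Definition tvec (u : 'I_n -> 'cV[C]_D) : 'cV[C]_(tdim D n) :=
  \col_i \prod_k u k ((enum_val i : tidx D n) k) 0.

Lemma tprod_mul_adj (u : 'I_n -> 'cV[C]_D) :
  tprod (fun k => u k *m adj (u k)) = tvec u *m adj (tvec u).
Proof.
apply/matrixP => i j; rewrite !mxE big_ord1 !mxE rmorph_prod -big_split /=.
by apply: eq_bigr => k _; rewrite !mxE big_ord1 !mxE.
Qed.

Lemma tprod1 : tprod (fun _ => 1%:M) = 1%:M :> 'M[C]_(tdim D n).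
Proof.
apply/matrixP => i j; rewrite !mxE; under eq_bigr do rewrite mxE.
have [<-|i_neq_j] := eqVneq i j; first by rewrite big1 // => k _; rewrite eqxx.
have /existsP[k k_neq] : [exists k, (enum_val i : tidx D n) k != enum_val j k].
  apply: contra_neqT i_neq_j => /existsPn eq_ij.
  by apply/enum_val_inj/ffunP => k; apply/eqP/negPn/eq_ij.
by rewrite (bigD1 k) //= (negbTE k_neq) mul0r.
Qed.

Lemma psd_tprod_mul_adj (u : 'I_n -> 'cV[C]_D) :
  psd (tprod (fun k => u k *m adj (u k))).
Proof. by rewrite tprod_mul_adj; exact: psd_mul_adj. Qed.

Lemma mxtrace_tprod_mul_adj (B : 'I_n -> 'M[C]_D) (u : 'I_n -> 'cV[C]_D) :
  \tr (tprod B *m tprod (fun k => u k *m adj (u k))) = \prod_k qform (B k) (u k).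
Proof. by rewrite mul_tprod mxtrace_tprod; apply: eq_bigr => k _; rewrite mxtrace_mul_adj. Qed.

Section Permutation.
Variable s : 'S_n.

Definition tperm_index (i : 'I_(tdim D n)) : 'I_(tdim D n) :=
  enum_rank [ffun k => (enum_val i : tidx D n) ((s^-1)%g k)].

Lemma tperm_opE i j : tperm_op R D s i j = (j == tperm_index i)%:R.
Proof.
rewrite mxE /tperm_index -(inj_eq enum_val_inj) enum_rankK.
congr ((nat_of_bool _)%:R); apply/eqP/eqP => ->; apply/ffunP => k; rewrite !ffunE.
  by rewrite permKV.
by rewrite permK.
Qed.

Lemma tperm_op_conjE (M : 'M[C]_(tdim D n)) i j :
  (tperm_op R D s *m M *m adj (tperm_op R D s)) i j = M (tperm_index i) (tperm_index j).
Proof.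
rewrite mxE (bigD1 (tperm_index j)) //= big1 ?addr0; last first.
  by move=> b /negbTE b_neq; rewrite adjE tperm_opE b_neq conjC0 mulr0.
rewrite adjE tperm_opE eqxx conjC1 mulr1 mxE (bigD1 (tperm_index i)) //= big1 ?addr0.
  by rewrite tperm_opE eqxx mul1r.
by move=> b /negbTE b_neq; rewrite tperm_opE b_neq mul0r.
Qed.

Lemma tperm_op_conj_tprod (A : 'I_n -> 'M[C]_D) :
  tperm_op R D s *m tprod A *m adj (tperm_op R D s) = tprod (fun k => A (s k)).
Proof.
apply/matrixP => i j; rewrite tperm_op_conjE !mxE /tperm_index !enum_rankK.
rewrite (reindex_inj (@perm_inj _ s)); apply: eq_bigr => k _.
by rewrite !ffunE permK.
Qed.

End Permutation.

Lemma perm_invariant_lincomb a b (rho sigma : 'M[C]_(tdim D n)) :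
  perm_invariant rho -> perm_invariant sigma -> perm_invariant (a *: rho + b *: sigma).
Proof.
move=> inv_rho inv_sigma s.
by rewrite mulmxDr mulmxDl -!scalemxAr -!scalemxAl inv_rho inv_sigma.
Qed.

End TensorProduct.

Section SymmetricState.
Variables (R : realType) (D N : nat) (psi : 'cV[R[i]]_D).
Local Notation C := (R[i]).
Hypothesis psi_unit : unit_vector psi.

Definition sym_factor (phi : 'cV[C]_D) (j k : 'I_N.+1) := if k == j then phi else psi.

Definition sym_state (phi : 'cV[C]_D) : 'M[C]_(tdim D N.+1) :=
  \sum_(j < N.+1) tprod (fun k => sym_factor phi j k *m adj (sym_factor phi j k)).

Lemma psd_sym_state phi : psd (sym_state phi).
Proof. by apply: psd_sum => j; exact: psd_tprod_mul_adj. Qed.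

Lemma perm_invariant_sym_state phi : perm_invariant (sym_state phi).
Proof.
move=> s; rewrite mulmx_sumr mulmx_suml.
under eq_bigr do rewrite tperm_op_conj_tprod.
rewrite (reindex_inj (@perm_inj _ s)); apply: eq_bigr => j _.
by congr tprod; apply: funext => k; rewrite /sym_factor (inj_eq (@perm_inj _ s)).
Qed.

Lemma mxtrace_tprod_sym_state (B : 'I_N.+1 -> 'M[C]_D) phi :
  (forall k, qform (B k) psi = 1) ->
  \tr (tprod B *m sym_state phi) = \sum_(j < N.+1) qform (B j) phi.
Proof.
move=> B_psi; rewrite mulmx_sumr linear_sum; apply: eq_bigr => j _ /=.
rewrite mxtrace_tprod_mul_adj (bigD1 j) //= big1 ?mulr1 /sym_factor ?eqxx //.
by move=> k /negbTE k_neq_j; rewrite k_neq_j.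
Qed.

Lemma mxtrace_sym_state phi : \tr (sym_state phi) = qform 1 phi *+ N.+1.
Proof.
rewrite -[sym_state phi]mul1mx -tprod1 mxtrace_tprod_sym_state.
  by rewrite sumr_const card_ord.
by move=> k; rewrite /qform mulmx1.
Qed.

Definition sym_density phi := (N.+1%:R * qform 1 phi)^-1 *: sym_state phi.

Lemma density_sym_density phi : phi != 0 -> density (sym_density phi).
Proof.
move=> phi_neq0; have q_gt0 := qform1_gt0 phi_neq0; split.
  by apply: psdZ; [rewrite invr_ge0 mulr_ge0 ?ler0n ?ltW | exact: psd_sym_state].
rewrite mxtraceZ mxtrace_sym_state -[qform 1 phi *+ _]mulr_natl mulVf //.
by rewrite mulf_neq0 ?pnatr_eq0 ?gt_eqF.
Qed.

Lemma perm_invariant_sym_density phi : perm_invariant (sym_density phi).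
Proof. by move=> s; rewrite -scalemxAr -scalemxAl perm_invariant_sym_state. Qed.

Section VerificationOperator.
Variable Om : 'M[C]_D.
Hypotheses (Om_herm : adj Om = Om) (Om_psi : Om *m psi = psi).

Section Eigenvector.
Variables (phi : 'cV[C]_D) (a : C).
Hypotheses (phi_neq0 : phi != 0) (Om_phi : Om *m phi = a *: phi) (a_neq1 : a != 1).

Lemma mxtrace_OmN_tens_sym_state (B : 'M[C]_D) : qform B psi = 1 ->
  \tr (OmN_tens N Om B *m sym_state phi) = a * qform 1 phi *+ N + qform B phi.
Proof.
move=> B_psi; rewrite mxtrace_tprod_sym_state; last first.
  by move=> k; case: ifP => // _; rewrite /qform -mulmxA Om_psi.
rewrite big_ord_recr /= ltnn -[in RHS](card_ord N) -sumr_const; congr (_ + _).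
by apply: eq_bigr => j _; rewrite ltn_ord /qform -mulmxA Om_phi -scalemxAr mxE mulmx1.
Qed.

Lemma mxtrace_OmN_tens_sym_density (B : 'M[C]_D) b :
  qform B psi = 1 -> qform B phi = b * qform 1 phi ->
  \tr (OmN_tens N Om B *m sym_density phi) = (N%:R * a + b) / N.+1%:R.
Proof.
move=> B_psi B_phi; have q_neq0 : qform 1 phi != 0 by rewrite gt_eqF // qform1_gt0.
rewrite -scalemxAr mxtraceZ mxtrace_OmN_tens_sym_state // B_phi -mulr_natr.
by field; rewrite nat1r pnatr_eq0 q_neq0.
Qed.

Lemma p_rho_sym_density : p_rho Om (sym_density phi) = (1 + N%:R * a) / N.+1%:R.
Proof.
by rewrite /p_rho addrC (mxtrace_OmN_tens_sym_density (b := 1)) // /qform mulmx1 ?mul1r.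
Qed.

Lemma f_rho_sym_density : f_rho Om psi (sym_density phi) = N%:R * a / N.+1%:R.
Proof.
have psi_phi : adj psi *m phi = 0.
  apply: (eigenvector_orthogonal (a := 1) Om_herm _ Om_phi); first by rewrite scale1r.
  by rewrite conjC1 eq_sym.
rewrite /f_rho (mxtrace_OmN_tens_sym_density (b := 0)) ?addr0 //.
  by rewrite /qform mulmxA -mulmxA mxE big_ord1 psi_unit mulr1.
by rewrite mul0r /qform mulmxA -mulmxA psi_phi mulmx0 mxE.
Qed.

End Eigenvector.

Lemma exists_sym_mixture (phi0 phi1 : 'cV[C]_D) (a0 a1 d : C) :
  phi0 != 0 -> Om *m phi0 = a0 *: phi0 -> a0 != 1 ->
  phi1 != 0 -> Om *m phi1 = a1 *: phi1 -> a1 != 1 ->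
  (1 + N%:R * a0) / N.+1%:R <= d -> d <= (1 + N%:R * a1) / N.+1%:R ->
  exists rho : 'M[C]_(tdim D N.+1), [/\ density rho, perm_invariant rho,
    p_rho Om rho = d & f_rho Om psi rho = d - N.+1%:R^-1].
Proof.
move=> phi0_neq0 Om_phi0 a0_neq1 phi1_neq0 Om_phi1 a1_neq1 lo_d d_hi.
have [lam lam01 p_mix] := convex_interpolation lo_d d_hi.
exists ((1 - lam) *: sym_density phi0 + lam *: sym_density phi1); split.
- by apply: density_convex => //; exact: density_sym_density.
- by apply: perm_invariant_lincomb; exact: perm_invariant_sym_density.
- rewrite /p_rho mxtrace_mul_lincomb -!/(p_rho _ _).
  by rewrite (p_rho_sym_density phi0_neq0 Om_phi0) (p_rho_sym_density phi1_neq0 Om_phi1).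
rewrite /f_rho mxtrace_mul_lincomb -!/(f_rho _ _ _).
rewrite (f_rho_sym_density phi0_neq0 Om_phi0) ?(f_rho_sym_density phi1_neq0 Om_phi1) // -p_mix.
by ring.
Qed.

End VerificationOperator.

End SymmetricState.

Theorem lemma8 (R : realType) (D : nat) (psi : 'cV[R[i]]_D) (Om : 'M[R[i]]_D)
    (beta : R[i]) (N : nat) (delta : R) :
  (2 <= D)%N ->
  unit_vector psi ->
  verification_operator Om psi ->
  (* Omega is singular: its smallest eigenvalue is 0 *)
  eigenvalue Om 0 -> (forall a, eigenvalue Om a -> 0 <= a) ->
  (* beta is the second largest eigenvalue of Omega *)
  eigenvalue Om beta -> beta != 1 ->
  (forall a, eigenvalue Om a -> a != 1 -> a <= beta) ->
  (1 <= N)%N ->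
  (N.+1%:R)^-1 <= RtoC delta ->
  RtoC delta <= (1 + N%:R * beta) / N.+1%:R ->
  Fval N delta Om psi <= 1 - (N.+1%:R * delta)^-1.
Proof.
move=> _ psi_unit [Om_herm _ _ Om_psi _] eig0 eig_ge0 eig_beta beta_neq1 _ _ lo hi.
have [phi0 phi0_neq0 Om_phi0] := hermitian_eigenvector Om_herm eig0.
have [phi1 phi1_neq0 Om_phi1] := hermitian_eigenvector Om_herm eig_beta.
rewrite conjC0 in Om_phi0; rewrite (CrealP (ger0_real (eig_ge0 _ eig_beta))) in Om_phi1.
have [||rho [rho_density rho_inv p_eq f_eq]] :=
  exists_sym_mixture psi_unit Om_herm Om_psi phi0_neq0 Om_phi0 _
    phi1_neq0 Om_phi1 beta_neq1 _ hi.
- by rewrite eq_sym oner_neq0.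
- by rewrite mulr0 addr0 mul1r.
have delta_ge : 1 <= N.+1%:R * delta.
  by rewrite -lecR rmorphM rmorph_nat rmorph1 -ler_pdivrMl ?ltr0n // mulr1.
apply: inf_le_nonneg_mem; last by rewrite subr_ge0 invf_le1 // (lt_le_trans ltr01).
exists rho; split => //; first by rewrite p_eq.
have delta_neq0 : RtoC delta != 0 by rewrite gt_eqF // (lt_le_trans _ lo) // invr_gt0 ltr0n.
rewrite p_eq f_eq /RtoC rmorphB rmorph1 fmorphV rmorphM rmorph_nat.
by field; rewrite delta_neq0 nat1r pnatr_eq0.
Qed.
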